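(* If a graph $G$ is coarsely bottlenecked, then the natural map $f:G\to G_{\lambda,k}$ is a quasi-isometry for all $\lambda$ and all $k$.
   Context: All graphs are connected (and unbounded); multi-edges are allowed; $d$ is the graph metric on vertices. Sets $X,Y$ are $M$-disjoint if $d(x,y)>M$ for all $x\in X,y\in Y$; $X$ is $M$-connected if any two of its points are joined by a finite sequence in $X$ with consecutive distances $\le M$; $N_M(S)=\{y:d(s,y)<M\text{ for some }s\in S\}$. $G$ is $M$-fat $n$-bottlenecked if for any two connected $M$-disjoint subgraphs $X,Y\subset G$ there is $S\subset V(G)\setminus(V(X)\cup V(Y))$ with $|S|=n$ such that every path from a vertex of $X$ to a vertex of $Y$ meets $N_M(S)$; $G$ is coarsely bottlenecked if this holds for some $M,n\in\mathbb N$. Skeleton $G_{\lambda,k}$ (root $x_0\in V(G)$, scale $\lambda\ge1$, connectivity $k\ge1$): layers $A_{N,\lambda}=\{x: N\lambda<d(x,x_0)\le(N+1)\lambda\}$, $N\in\mathbb Z$; blocks are the maximal $k$-connected subsets of layers; $G_{\lambda,k}$ has a vertex per block and an edge between two blocks iff an edge of $G$ joins them. The natural map $f$ sends each vertex of $G$ to its block. *)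

From Stdlib Require Import Reals List Arith ClassicalEpsilon.

(* A graph is given by a vertex type V and a (symmetric) adjacency relation
   adj; multi-edges are irrelevant for everything below (metric, paths). *)

Inductive walk {V : Type} (adj : V -> V -> Prop) : V -> V -> nat -> Prop :=
| walk0 : forall x, walk adj x x 0
| walkS : forall x y z n, adj x y -> walk adj y z n -> walk adj x z (S n).

(* graph metric: the least length of a walk (well-defined for connected graphs) *)
Definition dist {V : Type} (adj : V -> V -> Prop) (x y : V) : nat :=
  epsilon (inhabits 0%nat)
    (fun n => walk adj x y n /\ forall m, walk adj x y m -> (n <= m)%nat).

Definition gsymmetric {V : Type} (adj : V -> V -> Prop) : Prop :=
  forall x y, adj x y -> adj y x.

Definition gconnected {V : Type} (adj : V -> V -> Prop) : Prop :=
  forall x y, exists n, walk adj x y n.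

Definition gunbounded {V : Type} (adj : V -> V -> Prop) : Prop :=
  forall n, exists x y, (n < dist adj x y)%nat.

Fixpoint adj_chain {V : Type} (adj : V -> V -> Prop) (x : V) (l : list V) : Prop :=
  match l with
  | nil => True
  | y :: l' => adj x y /\ adj_chain adj y l'
  end.

(* p = x :: l is a path starting at x and ending at last p x *)
Definition is_path {V : Type} (adj : V -> V -> Prop) (x : V) (l : list V) : Prop :=
  adj_chain adj x l.

Definition is_subgraph {V : Type} (adj : V -> V -> Prop)
  (VX : V -> Prop) (EX : V -> V -> Prop) : Prop :=
  forall x y, EX x y -> adj x y /\ VX x /\ VX y.

Definition connected_subgraph {V : Type} (adj : V -> V -> Prop)
  (VX : V -> Prop) (EX : V -> V -> Prop) : Prop :=
  is_subgraph adj VX EX /\ (exists x, VX x) /\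
  forall x y, VX x -> VX y -> exists n, walk (fun a b => EX a b \/ EX b a) x y n.

Definition M_disjoint {V : Type} (adj : V -> V -> Prop) (M : nat)
  (X Y : V -> Prop) : Prop :=
  forall x y, X x -> Y y -> (M < dist adj x y)%nat.

Definition nbhd {V : Type} (adj : V -> V -> Prop) (M : nat) (S : list V) (y : V) : Prop :=
  exists s, In s S /\ (dist adj s y < M)%nat.

Definition fat_bottlenecked {V : Type} (adj : V -> V -> Prop) (M n : nat) : Prop :=
  forall (VX : V -> Prop) (EX : V -> V -> Prop) (VY : V -> Prop) (EY : V -> V -> Prop),
    connected_subgraph adj VX EX -> connected_subgraph adj VY EY ->
    M_disjoint adj M VX VY ->
    exists S : list V,
      NoDup S /\ length S = n /\
      (forall s, In s S -> ~ VX s /\ ~ VY s) /\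
      (forall x l, VX x -> is_path adj x l -> VY (last l x) ->
         exists v, In v (x :: l) /\ nbhd adj M S v).

Definition coarsely_bottlenecked {V : Type} (adj : V -> V -> Prop) : Prop :=
  exists M n : nat, fat_bottlenecked adj M n.

Local Open Scope R_scope.

Definition layer {V : Type} (adj : V -> V -> Prop) (x0 : V) (lam : R) (N : Z)
  (x : V) : Prop :=
  IZR N * lam < INR (dist adj x x0) <= (IZR N + 1) * lam.

Inductive kchain {V : Type} (adj : V -> V -> Prop) (k : nat) (X : V -> Prop)
  : V -> V -> Prop :=
| kchain0 : forall a, X a -> kchain adj k X a a
| kchainS : forall a c b, X a -> (dist adj a c <= k)%nat -> kchain adj k X c b ->
    kchain adj k X a b.

Definition k_connected {V : Type} (adj : V -> V -> Prop) (k : nat) (X : V -> Prop) : Prop :=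
  forall a b, X a -> X b -> kchain adj k X a b.

Definition subset {V : Type} (A B : V -> Prop) : Prop := forall x, A x -> B x.

Definition is_block {V : Type} (adj : V -> V -> Prop) (x0 : V) (lam : R) (k : nat)
  (B : V -> Prop) : Prop :=
  exists N : Z,
    subset B (layer adj x0 lam N) /\ (exists x, B x) /\ k_connected adj k B /\
    (forall B' : V -> Prop, subset B' (layer adj x0 lam N) -> k_connected adj k B' ->
       subset B B' -> subset B' B).

Definition skel_vertex {V : Type} (adj : V -> V -> Prop) (x0 : V) (lam : R) (k : nat) :=
  { B : V -> Prop | is_block adj x0 lam k B }.

Definition skel_adj {V : Type} (adj : V -> V -> Prop) (x0 : V) (lam : R) (k : nat)
  (B1 B2 : skel_vertex adj x0 lam k) : Prop :=
  exists x y, proj1_sig B1 x /\ proj1_sig B2 y /\ adj x y.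

Definition quasi_isometry {A B : Type} (adjA : A -> A -> Prop) (adjB : B -> B -> Prop)
  (f : A -> B) : Prop :=
  exists K C : nat,
    (forall x y,
        (dist adjB (f x) (f y) <= K * dist adjA x y + C)%nat /\
        (dist adjA x y <= K * dist adjB (f x) (f y) + C)%nat) /\
    (forall b, exists a, (dist adjB (f a) b <= C)%nat).

(* Take a k-chain across
   a block far from x0 and thicken it into a path of G: the path stays in an
   annulus of bounded width around x0, and it is M-disjoint from the ball just
   inside that annulus. A bottleneck of n points separates the two, and since
   every vertex of the path reaches the ball by a geodesic of bounded length,
   every vertex of the path lies within bounded distance R of one of n points.
   A path covered by n balls of radius R has its endpoints within n(2R+1), so
   blocks have uniformly bounded diameter, and mapping each vertex to its
   block is then a quasi-isometry. *)

From Pilot Require Import Defs.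
From Stdlib Require Import Reals List Arith Lia Lra Classical ClassicalEpsilon Wf_nat.

Section Walks.

Context {V : Type}.
Context {r : V -> V -> Prop}.

Lemma walk_trans x y z n m : walk r x y n -> walk r y z m -> walk r x z (n + m).
Proof. induction 1; intros; simpl; [assumption | econstructor; eauto]. Qed.

Lemma walk_split {a b x z} : walk r x z (a + b) -> exists u, walk r x u a /\ walk r u z b.
Proof.
  revert x; induction a as [|a IH]; intros x Hw; simpl in Hw.
  - exists x; split; [constructor | exact Hw].
  - inversion Hw as [|? y ? ? Hxy Hyz]; subst.
    destruct (IH y Hyz) as [u [Hyu Huz]].
    exists u; split; [econstructor; eauto | exact Huz].
Qed.

Lemma walk_rev : gsymmetric r -> forall x y n, walk r x y n -> walk r y x n.
Proof.
  intros Hr x y n; induction 1 as [|x y z n Hxy _ IH]; [constructor |].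
  rewrite <- Nat.add_1_r; apply walk_trans with y; [exact IH |].
  econstructor; [apply Hr, Hxy | constructor].
Qed.

Lemma dist_spec {x y n} : walk r x y n ->
  walk r x y (Defs.dist r x y) /\ forall m, walk r x y m -> Defs.dist r x y <= m.
Proof.
  intros Hn; unfold Defs.dist; apply epsilon_spec.
  destruct (dec_inh_nat_subset_has_unique_least_element (walk r x y)) as [m [Hm _]];
    [intros; apply classic | exists n; exact Hn | exists m; exact Hm].
Qed.

Lemma dist_le_walk {x y n} : walk r x y n -> Defs.dist r x y <= n.
Proof. intros Hn; exact (proj2 (dist_spec Hn) n Hn). Qed.

Lemma dist_refl x : Defs.dist r x x = 0.
Proof. pose proof (dist_le_walk (walk0 r x)); lia. Qed.

Lemma dist_le_1_of_adj {x y} : r x y -> Defs.dist r x y <= 1.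
Proof. intros Hxy; apply dist_le_walk; econstructor; [exact Hxy | constructor]. Qed.

End Walks.

Lemma last_cons {A} (l : list A) : forall a d, last (a :: l) d = last l a.
Proof.
  induction l as [|b l IH]; intros a d; [reflexivity |].
  change (last (b :: l) d = last (b :: l) a); rewrite !IH; reflexivity.
Qed.

Lemma last_app_last {A} (l1 l2 : list A) x : last (l1 ++ l2) x = last l2 (last l1 x).
Proof.
  revert x; induction l1 as [|a l1 IH]; intros x; [reflexivity |].
  simpl app; rewrite !last_cons; apply IH.
Qed.

Lemma split_at_last {A} (Q : A -> Prop) x l : Q x ->
  exists l1 l2, l = l1 ++ l2 /\ Q (last l1 x) /\ forall w, In w l2 -> ~ Q w.
Proof.
  intros Hx; induction l as [|y l IH] using rev_ind.
  - exists nil, nil; simpl; auto.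
  - destruct (classic (Q y)) as [Hy | Hy].
    + exists (l ++ y :: nil), nil; rewrite app_nil_r, last_last; simpl; auto.
    + destruct IH as [l1 [l2 [-> [H1 H2]]]].
      exists l1, (l2 ++ y :: nil); rewrite app_assoc; repeat split; auto.
      intros w Hw; apply in_app_or in Hw; destruct Hw as [Hw | [<- | []]]; auto.
Qed.

Section GraphMetric.

Context {V : Type}.
Context {adj : V -> V -> Prop}.

Lemma is_path_app l1 l2 x :
  is_path adj x (l1 ++ l2) <-> is_path adj x l1 /\ is_path adj (last l1 x) l2.
Proof.
  unfold is_path; revert x; induction l1 as [|a l1 IH]; intros x; simpl; [tauto |].
  change (adj x a /\ adj_chain adj a (l1 ++ l2) <->
          (adj x a /\ adj_chain adj a l1) /\ adj_chain adj (last (a :: l1) x) l2).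
  rewrite last_cons, IH; tauto.
Qed.

Hypothesis Hconn : gconnected adj.

Lemma walk_dist x y : walk adj x y (Defs.dist adj x y).
Proof. destruct (Hconn x y) as [n Hn]; exact (proj1 (dist_spec Hn)). Qed.

Lemma dist_triangle x y z : Defs.dist adj x z <= Defs.dist adj x y + Defs.dist adj y z.
Proof. apply dist_le_walk, walk_trans with y; apply walk_dist. Qed.

Lemma exists_adj_of_unbounded : gunbounded adj -> forall a, exists a', adj a a'.
Proof.
  intros Hunb a; apply NNPP; intros Hisolated.
  assert (Hstuck : forall z m, walk adj a z m -> z = a).
  { intros z m Hw; inversion Hw; subst; [reflexivity | exfalso; eauto]. }
  destruct (Hunb 0) as [u [v Huv]].
  destruct (Hconn a u) as [m1 Hu]; destruct (Hconn a v) as [m2 Hv].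
  rewrite (Hstuck _ _ Hu), (Hstuck _ _ Hv), dist_refl in Huv; lia.
Qed.

Hypothesis Hsym : gsymmetric adj.

Lemma dist_sym x y : Defs.dist adj x y = Defs.dist adj y x.
Proof. apply Nat.le_antisymm; apply dist_le_walk, walk_rev, walk_dist; assumption. Qed.

Lemma path_of_walk {x y n} : walk adj x y n ->
  exists l, is_path adj x l /\ last l x = y /\
    forall v, In v (x :: l) -> Defs.dist adj x v <= n.
Proof.
  induction 1 as [x | x y z n Hxy _ [l [Hl [Hlast Hnear]]]].
  - exists nil; split; [exact I | split; [reflexivity |]].
    intros v [<- | []]; rewrite dist_refl; lia.
  - exists (y :: l); split; [split; assumption | split; [rewrite last_cons; exact Hlast |]].
    intros v [<- | Hv]; [rewrite dist_refl; lia |].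
    pose proof (Hnear v Hv); pose proof (dist_triangle x y v).
    pose proof (dist_le_1_of_adj Hxy); lia.
Qed.

Lemma path_of_kchain {k B x y} : kchain adj k B x y ->
  exists l, is_path adj x l /\ last l x = y /\
    forall v, In v (x :: l) -> exists a, B a /\ Defs.dist adj a v <= k.
Proof.
  induction 1 as [a Ha | a c b Ha Hac _ [l2 [Hp2 [Hl2 Hnear2]]]].
  - exists nil; split; [exact I | split; [reflexivity |]].
    intros v [<- | []]; exists a; rewrite dist_refl; split; [exact Ha | lia].
  - destruct (path_of_walk (walk_dist a c)) as [l1 [Hp1 [Hl1 Hnear1]]].
    exists (l1 ++ l2); split; [apply is_path_app; rewrite Hl1; auto |].
    split; [rewrite last_app_last, Hl1; exact Hl2 |].
    intros v Hv; change (In v ((a :: l1) ++ l2)) in Hv; apply in_app_or in Hv.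
    destruct Hv as [Hv | Hv]; [| apply Hnear2; right; exact Hv].
    exists a; split; [exact Ha |]; pose proof (Hnear1 v Hv); lia.
Qed.

Definition induced (P : V -> Prop) (a b : V) : Prop := P a /\ P b /\ adj a b.

Lemma connected_subgraph_of_hub P c : P c ->
  (forall u, P u -> exists n, walk (fun a b => induced P a b \/ induced P b a) u c n) ->
  connected_subgraph adj P (induced P).
Proof.
  intros Hc Hhub; split; [intros a b (Ha & Hb & Hab); auto | split; [exists c; exact Hc |]].
  intros u v Hu Hv; destruct (Hhub u Hu) as [n1 H1]; destruct (Hhub v Hv) as [n2 H2].
  exists (n1 + n2); apply walk_trans with c; [exact H1 |].
  apply walk_rev; [intros a b [H | H]; auto | exact H2].
Qed.

Lemma walk_along_path P x l : is_path adj x l -> (forall w, In w (x :: l) -> P w) ->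
  forall u, In u (x :: l) -> exists n, walk (fun a b => induced P a b \/ induced P b a) u x n.
Proof.
  revert x; induction l as [|y l IH]; intros x Hp HP u Hu.
  - destruct Hu as [<- | []]; exists 0; constructor.
  - destruct Hu as [<- | Hu]; [exists 0; constructor |].
    destruct Hp as [Hxy Hp].
    destruct (IH y Hp (fun w Hw => HP w (or_intror Hw)) u Hu) as [n Hn].
    exists (n + 1); apply walk_trans with y; [exact Hn |].
    apply (walkS _ y x x 0); [right; repeat split; auto; apply HP; simpl; auto | constructor].
Qed.

Lemma connected_subgraph_path {x l} : is_path adj x l ->
  connected_subgraph adj (fun v => In v (x :: l)) (induced (fun v => In v (x :: l))).
Proof.
  intros Hp; apply connected_subgraph_of_hub with x; [left; reflexivity |].
  apply walk_along_path; auto.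
Qed.

Lemma walk_in_ball {P v z n} : walk adj v z n ->
  (forall w m, walk adj w z m -> m <= n -> P w) ->
  walk (fun a b => induced P a b \/ induced P b a) v z n.
Proof.
  induction 1 as [x | x y z n Hxy Hw IH]; intros HP; [constructor |].
  econstructor; [left; repeat split; [| | exact Hxy] |].
  - apply (HP x (S n)); [econstructor; eauto | lia].
  - apply (HP y n); [exact Hw | lia].
  - apply IH; intros w m Hwm Hm; apply (HP w m Hwm); lia.
Qed.

Lemma connected_subgraph_ball z rho :
  connected_subgraph adj (fun v => Defs.dist adj v z <= rho)
    (induced (fun v => Defs.dist adj v z <= rho)).
Proof.
  apply connected_subgraph_of_hub with z; [rewrite dist_refl; lia |].
  intros u Hu; exists (Defs.dist adj u z); apply walk_in_ball; [apply walk_dist |].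
  intros w m Hw Hm; pose proof (dist_le_walk Hw); lia.
Qed.

Definition vertex_eq_dec (x y : V) : {x = y} + {x <> y} := excluded_middle_informative (x = y).

(* A ball containing x also contains a last vertex of the path; after that
   vertex the path avoids the ball, so its centre can be discarded. *)
Lemma dist_ends_le_of_cover R m : forall (S : list V) x l, length S <= m -> is_path adj x l ->
  (forall w, In w (x :: l) -> exists s, In s S /\ Defs.dist adj s w <= R) ->
  Defs.dist adj x (last l x) <= m * (2 * R + 1).
Proof.
  induction m as [|m IH]; intros S x l HS Hp Hcov;
    destruct (Hcov x (or_introl eq_refl)) as [s [Hs Hsx]].
  - destruct S; [destruct Hs | simpl in HS; lia].
  - destruct (split_at_last (fun w => Defs.dist adj s w <= R) x l Hsx)
      as [l1 [l2 [-> [Hlast1 Hleave]]]].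
    rewrite last_app_last; apply is_path_app in Hp; destruct Hp as [_ Hp2].
    pose proof (dist_triangle x s (last l1 x)); pose proof (dist_sym x s).
    destruct l2 as [|y l2]; [simpl; nia |].
    destruct Hp2 as [Hy Hp2]; rewrite last_cons.
    assert (Hrest : Defs.dist adj y (last l2 y) <= m * (2 * R + 1)).
    { apply (IH (remove vertex_eq_dec s S)); [| exact Hp2 |].
      { pose proof (remove_length_lt vertex_eq_dec S s Hs); lia. }
      intros w Hw; destruct (Hcov w) as [s' [Hs' Hd]]; [right; apply in_or_app; right; exact Hw |].
      exists s'; split; [| exact Hd].
      apply in_in_remove; [intros ->; exact (Hleave w Hw Hd) | exact Hs']. }
    pose proof (dist_triangle x (last l1 x) (last l2 y)).
    pose proof (dist_triangle (last l1 x) y (last l2 y)).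
    pose proof (dist_le_1_of_adj Hy); nia.
Qed.

Section Bottleneck.

Variables M n : nat.
Hypothesis Hfb : fat_bottlenecked adj M n.

Lemma annulus_path_dist_le x0 rho T x l : is_path adj x l ->
  (forall z, In z (x :: l) -> rho + M < Defs.dist adj z x0 <= rho + T) ->
  Defs.dist adj x (last l x) <= n * (2 * (M + T) + 1).
Proof.
  intros Hp Hann.
  assert (Hdisj : M_disjoint adj M (fun v => In v (x :: l))
                    (fun v => Defs.dist adj v x0 <= rho)).
  { intros z w Hz Hw; pose proof (Hann z Hz); pose proof (dist_triangle z w x0); lia. }
  destruct (Hfb _ _ _ _ (connected_subgraph_path Hp) (connected_subgraph_ball x0 rho) Hdisj)
    as [S [_ [HS [_ Hsep]]]].
  apply (dist_ends_le_of_cover (M + T) n S); [lia | exact Hp |].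
  intros z Hz; destruct (Hann z Hz) as [Hfar Hnear].
  assert (Hgeo : walk adj z x0 ((Defs.dist adj z x0 - rho) + rho))
    by (replace (_ + rho) with (Defs.dist adj z x0) by lia; apply walk_dist).
  destruct (walk_split Hgeo) as [u [Hzu Hux0]].
  destruct (path_of_walk Hzu) as [lz [Hpz [Hlast Hclose]]].
  destruct (Hsep z lz Hz Hpz) as [v [Hv [s [Hs Hsv]]]];
    [rewrite Hlast; exact (dist_le_walk Hux0) |].
  exists s; split; [exact Hs |].
  pose proof (Hclose v Hv); pose proof (dist_triangle s v z); pose proof (dist_sym v z); lia.
Qed.

Lemma thin_kconnected_dist_le x0 k w B : k_connected adj k B ->
  (forall a b, B a -> B b -> Defs.dist adj a x0 < Defs.dist adj b x0 + w) ->
  forall x y, B x -> B y ->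
  Defs.dist adj x y <= n * (2 * (2 * M + 2 * w + 2 * k + 1) + 1) + (3 * w + 2 * k + 2 * M + 2).
Proof.
  intros Hk Hthin x y Hx Hy.
  destruct (le_lt_dec (Defs.dist adj x x0) (w + k + M + 1)) as [Hsmall | Hbig].
  - pose proof (dist_triangle x x0 y); pose proof (dist_sym x0 y); pose proof (Hthin y x Hy Hx).
    lia.
  - destruct (path_of_kchain (Hk x y Hx Hy)) as [l [Hp [<- Hnear]]].
    enough (Defs.dist adj x (last l x) <= n * (2 * (M + (2 * w + 2 * k + M + 1)) + 1)) by nia.
    apply (annulus_path_dist_le x0 (Defs.dist adj x x0 - (w + k + M + 1))); [exact Hp |].
    intros z Hz; destruct (Hnear z Hz) as [a [Ha Haz]].
    pose proof (Hthin x a Hx Ha); pose proof (Hthin a x Ha Hx).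
    pose proof (dist_triangle a z x0); pose proof (dist_triangle z a x0); pose proof (dist_sym z a).
    lia.
Qed.

End Bottleneck.

Lemma layer_dist_lt x0 lam N w a b : (lam <= INR w)%R ->
  layer adj x0 lam N a -> layer adj x0 lam N b ->
  Defs.dist adj a x0 < Defs.dist adj b x0 + w.
Proof. intros Hw [Ha1 Ha2] [Hb1 Hb2]; apply INR_lt; rewrite plus_INR; nra. Qed.

Lemma block_diam_bounded : coarsely_bottlenecked adj -> forall x0 lam k, exists D,
  forall B, is_block adj x0 lam k B -> forall x y, B x -> B y -> Defs.dist adj x y <= D.
Proof.
  intros [M [n Hfb]] x0 lam k; destruct (INR_unbounded lam) as [w Hw].
  eexists; intros B [N [Hlayer [_ [Hk _]]]] x y Hx Hy.
  apply (thin_kconnected_dist_le M n Hfb x0 k w B Hk); [| exact Hx | exact Hy].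
  intros a b Ha Hb; apply (layer_dist_lt x0 lam N); [lra | apply Hlayer; assumption ..].
Qed.

Section BoundedCover.

Context {W : Type}.
Variables (adjW : W -> W -> Prop) (P : W -> V -> Prop) (f : V -> W) (D : nat).
Hypothesis f_cover : forall x, P (f x) x.
Hypothesis adjW_iff : forall b1 b2, adjW b1 b2 <-> exists p q, P b1 p /\ P b2 q /\ adj p q.
Hypothesis P_diam : forall b x y, P b x -> P b y -> Defs.dist adj x y <= D.

Lemma walk_image {x y m} : walk adj x y m -> walk adjW (f x) (f y) m.
Proof.
  induction 1 as [x | x y z m Hxy _ IH]; [constructor |].
  econstructor; [apply adjW_iff; exists x, y; auto | exact IH].
Qed.

Lemma dist_le_of_walk_image {b1 b2 m} : walk adjW b1 b2 m ->
  forall x y, P b1 x -> P b2 y -> Defs.dist adj x y <= m * (2 * D + 1) + D.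
Proof.
  induction 1 as [b | b1 b b2 m Hadj _ IH]; intros x y Hx Hy.
  { pose proof (P_diam _ _ _ Hx Hy); lia. }
  apply adjW_iff in Hadj; destruct Hadj as [p [q [Hp [Hq Hpq]]]].
  pose proof (P_diam _ _ _ Hx Hp); pose proof (IH q y Hq Hy).
  pose proof (dist_triangle x p y); pose proof (dist_triangle p q y).
  pose proof (dist_le_1_of_adj Hpq); nia.
Qed.

Hypothesis P_nonempty : forall b, exists a, P b a.
Hypothesis no_isolated : forall a, exists a', adj a a'.

Lemma quasi_isometry_of_bounded_cover : quasi_isometry adj adjW f.
Proof.
  exists (2 * D + 1), (D + 2); split.
  - intros x y; pose proof (walk_image (walk_dist x y)) as Himg; split.
    + pose proof (dist_le_walk Himg); nia.
    + pose proof (dist_le_of_walk_image (proj1 (dist_spec Himg)) _ _ (f_cover x) (f_cover y)); nia.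
  - intros b; destruct (P_nonempty b) as [a Ha]; destruct (no_isolated a) as [a' Haa'].
    exists a; enough (Defs.dist adjW (f a) b <= 2) by lia.
    apply dist_le_walk; econstructor; [| econstructor; [| constructor]];
      apply adjW_iff; [exists a, a' | exists a', a]; auto.
Qed.

End BoundedCover.

End GraphMetric.

Theorem corollary7 (V : Type) (adj : V -> V -> Prop)
  (Hsym : gsymmetric adj) (Hconn : gconnected adj) (Hunb : gunbounded adj) :
  coarsely_bottlenecked adj ->
  forall (x0 : V) (lam : R) (k : nat),
    (1 <= lam)%R -> (1 <= k)%nat ->
    forall f : V -> skel_vertex adj x0 lam k,
      (forall x, proj1_sig (f x) x) ->
      quasi_isometry adj (skel_adj adj x0 lam k) f.
Proof.
  intros Hcb x0 lam k _ _ f Hf.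
  destruct (block_diam_bounded Hconn Hsym Hcb x0 lam k) as [D HD].
  apply (quasi_isometry_of_bounded_cover Hconn Hsym _ (fun b x => proj1_sig b x) f D Hf).
  - intros b1 b2; reflexivity.
  - intros b x y; exact (HD _ (proj2_sig b) x y).
  - intros b; destruct (proj2_sig b) as [N [_ [Hne _]]]; exact Hne.
  - exact (exists_adj_of_unbounded Hconn Hunb).
Qed.
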